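(* Let $|\psi\rangle$ be a state in a tensor-product Hilbert space $\mathcal H=\bigotimes_v\mathcal H_v$ of finite-dimensional factors. Let $U=\prod_vU_v$ be an on-site unitary, with each $U_v$ a unitary on $\mathcal H_v$. Let $A_1,\dots,A_n$ be regions and $t_1,\dots,t_n\in\mathbb R$. Then $U$ can be moved to any position in the sequence of instantaneous modular flows: for every $i\in\{1,\dots,n+1\}$, $$U\,\mathcal I_{A_n}(t_n)\cdots\mathcal I_{A_1}(t_1)|\psi\rangle=\mathcal I_{A_n}(t_n)\cdots\mathcal I_{A_i}(t_i)\,U\,\mathcal I_{A_{i-1}}(t_{i-1})\cdots\mathcal I_{A_1}(t_1)|\psi\rangle.$$ In particular, $U\,\mathcal I_{A_n}(t_n)\cdots\mathcal I_{A_1}(t_1)|\psi\rangle=\mathcal I_{A_n}(t_n)\cdots\mathcal I_{A_1}(t_1)\,U|\psi\rangle$.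
   Context: A region $X$ is a set of sites, and $\overline X$ is its complement. For a state $|\phi\rangle$, $\rho_X=\mathrm{Tr}_{\overline X}|\phi\rangle\langle\phi|$, and $\rho_X^{{\bf i}t}$ is defined spectrally on the support of $\rho_X$, with $0^{{\bf i}t}:=0$. Instantaneous modular flow: $\mathcal I_X(t)|\phi\rangle:=\rho_X^{{\bf i}t}|\phi\rangle$, where $\rho_X$ is taken from the current state $|\phi\rangle$ on which the map acts. In a product of such maps and unitaries, applied right to left, each $\mathcal I_X(t)$ uses the reduced density matrix of the state produced by everything to its right. The maps are nonlinear. *)

From HB Require Import structures.
From mathcomp Require Import all_boot all_order all_algebra.
From mathcomp Require Import reals exp trigo.
From mathcomp.real_closed Require Import complex.
From Stdlib Require Import ClassicalEpsilon.
Set Implicit Arguments. Unset Strict Implicit. Unset Printing Implicit Defensive.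
Import Order.TTheory GRing.Theory Num.Theory.
Local Open Scope ring_scope.
Local Open Scope complex_scope.

Section QSpin.
Variable R : realType.
(* finite set of sites, each with a local dimension d v *)
Variable V : finType.
Variable d : V -> nat.

Notation C := R[i].

(* computational basis of H = (x)_v H_v : configurations c with c v : 'I_(d v) *)
Definition conf := {dffun forall v : V, 'I_(d v)}.

(* vectors in H and linear operators on H (matrices in the product basis) *)
Definition vec := conf -> C.
Definition op := conf -> conf -> C.

Definition app (M : op) (phi : vec) : vec := fun c => \sum_(c' : conf) M c c' * phi c'.

(* |phi><phi| partially traced over the complement of X, tensored with the
   identity on the complement:  (rho_X (x) 1_{Xbar}) *)
Definition glue (X : {set V}) (a e : conf) : conf :=
  [ffun v => if v \in X then a v else e v].

Definition rdm (X : {set V}) (phi : vec) : op := fun c c' =>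
  if [forall v, (v \notin X) ==> (c v == c' v)] then
    \sum_(e : conf | [forall v, (v \in X) ==> (e v == c v)])
       phi e * (phi (glue X c' e))^*
  else 0.

(* the scalar function lambda |-> lambda^{it} on positive reals, 0^{it} := 0 *)
Definition pow_it (t : R) (z : C) : C :=
  if 0 < z then
    let r := complex.Re z in cos (t * ln r) +i* sin (t * ln r)
  else 0.

(* spectral functional calculus: rho^{it} is the operator acting as
   lambda^{it} on each eigenspace (lambda) of rho. *)
Definition is_spec_pow_it (rho : op) (t : R) (M : op) : Prop :=
  forall (lam : C) (v : vec), app rho v = (fun c => lam * v c) ->
    app M v = (fun c => pow_it t lam * v c).

Definition spec_pow_it (rho : op) (t : R) : op :=
  epsilon (inhabits (fun _ _ => 0)) (is_spec_pow_it rho t).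

(* instantaneous modular flow I_X(t) |phi> = rho_X^{it} |phi> with rho_X
   taken from phi itself *)
Definition imf (X : {set V}) (t : R) (phi : vec) : vec :=
  app (spec_pow_it (rdm X phi) t) phi.

(* apply the flows of the list s = [:: (A_1,t_1); ...; (A_n,t_n)] in order:
   first I_{A_1}(t_1), last I_{A_n}(t_n) *)
Definition flows (s : seq ({set V} * R)) (phi : vec) : vec :=
  foldl (fun ph p => imf p.1 p.2 ph) phi s.

Definition adj n (M : 'M[C]_n) : 'M[C]_n := \matrix_(i, j) (M j i)^*.
Definition unitary n (M : 'M[C]_n) : Prop := M *m adj M = 1%:M /\ adj M *m M = 1%:M.

Definition onsite (U : forall v : V, 'M[C]_(d v)) : op :=
  fun c c' => \prod_(v : V) U v (c v) (c' v).

Definition normalized (phi : vec) : Prop := \sum_(c : conf) `|phi c| ^+ 2 = 1.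

End QSpin.

(* An on-site unitary W = (x)_v U_v factorises along X and its complement,
   so the reduced density matrix is covariant:
   rho_X(W phi) (x) 1 = W (rho_X(phi) (x) 1) W^*.  Hence W carries an
   eigenbasis of rho_X(phi) to one of rho_X(W phi) with the same eigenvalues,
   and since rho^{it} is determined by its action on eigenvectors,
   I_X(t) (W phi) = W (I_X(t) phi).  W therefore commutes with every flow of
   the sequence and can be moved to any position. *)

From HB Require Import structures.
From mathcomp Require Import all_boot all_order all_algebra.
From mathcomp Require Import reals exp trigo.
From mathcomp.real_closed Require Import complex.
From mathcomp Require Import ring.
From Stdlib Require Import ClassicalEpsilon FunctionalExtensionality.
Set Implicit Arguments. Unset Strict Implicit. Unset Printing Implicit Defensive.
Import Order.TTheory GRing.Theory Num.Theory.
Local Open Scope ring_scope.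
Local Open Scope complex_scope.

Section BigSums.
Variable R : comPzSemiRingType.

Lemma sum_dffun_prod (I : finType) (T_ : I -> finType) (F : forall i, T_ i -> R) :
  \sum_(f : {dffun forall i, T_ i}) \prod_i F i (f i) = \prod_i \sum_(k : T_ i) F i k.
Proof.
pose P_ i : {ffun T_ i -> R} := [ffun k => F i k].
transitivity (\sum_(t : fprod T_) \prod_(i in I) P_ i (t i)).
  rewrite (reindex (@dffun_of_fprod I T_)); last exact/onW_bij/dffun_of_fprod_bij.
  by apply: eq_bigr => t _; apply: eq_bigr => i _; rewrite /P_ !ffunE.
rewrite big_fprod; symmetry.
transitivity (\prod_i \sum_(j in tagged_with T_ i) untag 0 (P_ i) j).
  by apply: eq_bigr => i _; rewrite -(big_tag P_); apply: eq_bigr => k _; rewrite ffunE.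
exact: bigA_distr_big_dep.
Qed.

Lemma prod_nat_forall (I : finType) (P : pred I) :
  \prod_i ((P i)%:R : R) = [forall i, P i]%:R.
Proof.
have [/forallP allP | /forallPn [i nPi]] := boolP [forall i, P i].
  by rewrite big1 // => i _; rewrite allP.
by rewrite (bigD1 i) //= (negbTE nPi) mul0r.
Qed.

Lemma sum_delta (I : finType) (a : I) (h : I -> R) : \sum_i (i == a)%:R * h i = h a.
Proof.
under eq_bigr do rewrite mulr_natl mulrb.
by rewrite -big_mkcond big_pred1_eq.
Qed.

Lemma exchange_sum2 (I J : finType) (F : I -> I -> J -> J -> R) :
  \sum_i \sum_i' \sum_j \sum_j' F i i' j j' = \sum_j \sum_j' \sum_i \sum_i' F i i' j j'.
Proof.
under eq_bigr do rewrite exchange_big.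
rewrite exchange_big; apply: eq_bigr => j _.
by under eq_bigr do rewrite exchange_big; rewrite exchange_big.
Qed.

Lemma sum2_dffun_prod (I : finType) (T_ : I -> finType)
    (G : forall i, T_ i -> T_ i -> R) :
  \sum_(f : {dffun forall i, T_ i}) \sum_(g : {dffun forall i, T_ i})
      \prod_i G i (f i) (g i) =
  \prod_i \sum_(k : T_ i) \sum_(k' : T_ i) G i k k'.
Proof.
rewrite -(sum_dffun_prod (fun i k => \sum_k' G i k k')).
by apply: eq_bigr => f _; rewrite (sum_dffun_prod (fun i k' => G i (f i) k')).
Qed.

Lemma sum2_delta (I : finType) (a a' : I) (h : I -> I -> R) :
  \sum_i \sum_i' ((i == a) && (i' == a'))%:R * h i i' = h a a'.
Proof.
under eq_bigr => i _ do under eq_bigr => i' _ do rewrite -mulnb natrM -mulrA.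
under eq_bigr do rewrite -mulr_sumr sum_delta.
exact: sum_delta.
Qed.

Lemma sum2_diag (I : finType) (b : bool) (h : I -> I -> R) :
  \sum_i \sum_i' (b && (i == i'))%:R * h i i' = b%:R * \sum_i h i i.
Proof.
rewrite mulr_sumr; apply: eq_bigr => i _.
under eq_bigr do rewrite -mulnb natrM -mulrA eq_sym.
by rewrite -mulr_sumr sum_delta.
Qed.

End BigSums.

Section SpectralMap.
Variables (C : numClosedFieldType) (n : nat) (A : 'M[C]_n).
Hypothesis normalA : A \is normalmx.
Let P := spectralmx A.
Let D := spectral_diag A.

Definition spectral_map (f : C -> C) : 'M[C]_n :=
  invmx P *m diag_mx (map_mx f D) *m P.

Let P_unit : P \in unitmx. Proof. exact: spectral_unit. Qed.
Let defA : A = invmx P *m diag_mx D *m P. Proof. exact/orthomx_spectralP. Qed.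

Lemma spectral_map_eigen f lam (x : 'cV[C]_n) :
  A *m x = lam *: x -> spectral_map f *m x = f lam *: x.
Proof.
move=> Ax; set y := P *m x.
have Dy : diag_mx D *m y = lam *: y.
  have PA : P *m A = diag_mx D *m P by rewrite {1}defA !mulmxA mulmxV // mul1mx.
  by rewrite /y mulmxA -PA -mulmxA Ax scalemxAr.
have fDy : diag_mx (map_mx f D) *m y = f lam *: y.
  clearbody y; apply/matrixP => k j; move/matrixP: Dy => /(_ k j).
  rewrite !mul_diag_mx !mxE.
  have [->|nz] := eqVneq (y k j) 0; first by rewrite !mulr0.
  by move=> /(mulIf nz) ->.
by rewrite -!mulmxA fDy -scalemxAr mulmxA mulVmx // mul1mx.
Qed.

Lemma spectral_eigen_col k :
  A *m col k (invmx P) = D 0 k *: col k (invmx P).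
Proof.
have AQ : A *m invmx P = invmx P *m diag_mx D by rewrite defA -!mulmxA mulmxV // mulmx1.
apply/matrixP => i j; have := congr1 (fun M : 'M_n => M i k) AQ.
rewrite mul_mx_diag !mxE [D 0 k * _]mulrC => <-.
by apply: eq_bigr => l _; rewrite !mxE.
Qed.

End SpectralMap.

Section Operators.
Variables (R : realType) (V : finType) (d : V -> nat).
Notation C := R[i].
Notation conf := (conf d).
Notation vec := (vec R d).
Notation op := (op R d).
Notation N := #|{: conf}|.

Definition comp (M M' : op) : op := fun c c' => \sum_k M c k * M' k c'.
Definition adjoint (M : op) : op := fun c c' => (M c' c)^*.
Definition hermitian_op (rho : op) : Prop := forall c c', rho c' c = (rho c c')^*.

Lemma app_comp (M M' : op) (v : vec) : app (comp M M') v = app M (app M' v).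
Proof.
apply: functional_extensionality => c; rewrite /app /comp.
under eq_bigr do rewrite mulr_suml.
rewrite exchange_big; apply: eq_bigr => k _; rewrite mulr_sumr.
by apply: eq_bigr => c' _; rewrite mulrA.
Qed.

Lemma app_scale (M : op) (a : C) (v : vec) :
  app M (fun c => a * v c) = (fun c => a * app M v c).
Proof.
apply: functional_extensionality => c; rewrite /app mulr_sumr.
by apply: eq_bigr => c' _; rewrite mulrCA.
Qed.

Lemma app_sum (M : op) n (al : 'I_n -> C) (b : 'I_n -> vec) :
  app M (fun c => \sum_k al k * b k c) = (fun c => \sum_k al k * app M (b k) c).
Proof.
apply: functional_extensionality => c; rewrite /app.
under eq_bigr do rewrite mulr_sumr.
rewrite exchange_big; apply: eq_bigr => k _; rewrite mulr_sumr.
by apply: eq_bigr => c' _; rewrite mulrCA.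
Qed.

Definition tomx (M : op) : 'M[C]_N := \matrix_(i, j) M (enum_val i) (enum_val j).
Definition ofmx (A : 'M[C]_N) : op := fun c c' => A (enum_rank c) (enum_rank c').
Definition tocv (v : vec) : 'cV[C]_N := \col_i v (enum_val i).
Definition ofcv (x : 'cV[C]_N) : vec := fun c => x (enum_rank c) 0.

Lemma tocvK : cancel tocv ofcv.
Proof.
by move=> v; apply: functional_extensionality => c; rewrite /ofcv mxE enum_rankK.
Qed.

Lemma ofcvK : cancel ofcv tocv.
Proof. by move=> x; apply/matrixP => i j; rewrite (ord1 j) mxE /ofcv enum_valK. Qed.

Lemma ofmxK : cancel ofmx tomx.
Proof. by move=> A; apply/matrixP => i j; rewrite mxE /ofmx !enum_valK. Qed.

Lemma tocv_app (M : op) (v : vec) : tocv (app M v) = tomx M *m tocv v.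
Proof.
apply/matrixP => i j; rewrite !mxE /app (big_enum_val (A := predT)).
by apply: eq_bigr => k _; rewrite !mxE.
Qed.

Lemma tocv_scale (a : C) (v : vec) : tocv (fun c => a * v c) = a *: tocv v.
Proof. by apply/matrixP => i j; rewrite !mxE. Qed.

Lemma eigenvec_tomx (rho : op) (lam : C) (v : vec) :
  app rho v = (fun c => lam * v c) <-> tomx rho *m tocv v = lam *: tocv v.
Proof.
split=> [Ev | Ev]; first by rewrite -tocv_app Ev tocv_scale.
by apply: (can_inj tocvK); rewrite tocv_app Ev tocv_scale.
Qed.

Lemma hermitian_normalmx_tomx (rho : op) : hermitian_op rho -> tomx rho \is normalmx.
Proof.
move=> rho_herm; have adjA : (tomx rho ^t* )%sesqui = tomx rho.
  by apply/matrixP => i j; rewrite !mxE; exact/esym/rho_herm.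
by apply/normalmxP; rewrite adjA.
Qed.

Lemma spec_pow_itP (rho : op) (t : R) :
  hermitian_op rho -> is_spec_pow_it rho t (spec_pow_it rho t).
Proof.
move=> /hermitian_normalmx_tomx normal_rho; apply: epsilon_spec.
exists (ofmx (spectral_map (tomx rho) (pow_it t))) => lam v /eigenvec_tomx Ev.
by apply/eigenvec_tomx; rewrite ofmxK; apply: spectral_map_eigen.
Qed.

Definition eigen_spanning (rho : op) n (lam : 'I_n -> C) (b : 'I_n -> vec) : Prop :=
  (forall k, app rho (b k) = (fun c => lam k * b k c)) /\
  (forall phi : vec, exists al : 'I_n -> C, phi = (fun c => \sum_k al k * b k c)).

Lemma hermitian_eigen_spanning (rho : op) :
  hermitian_op rho -> exists lam b, @eigen_spanning rho N lam b.
Proof.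
move=> /hermitian_normalmx_tomx normal_rho; set P := spectralmx (tomx rho).
exists (fun k => spectral_diag (tomx rho) 0 k), (fun k => ofcv (col k (invmx P))).
split=> [k | phi].
  by apply/eigenvec_tomx; rewrite ofcvK; apply: spectral_eigen_col.
exists (fun k => (P *m tocv phi) k 0).
rewrite -{1}[phi]tocvK -{1}[tocv phi](mulKmx (spectral_unit (tomx rho))).
apply: functional_extensionality => c; rewrite /ofcv mxE.
by apply: eq_bigr => k _; rewrite !mxE mulrC.
Qed.

Lemma spec_pow_it_intertwine (rho rho' W M M' : op) t n lam b :
  @eigen_spanning rho n lam b -> is_spec_pow_it rho t M -> is_spec_pow_it rho' t M' ->
  (forall v, app rho' (app W v) = app W (app rho v)) ->
  forall phi, app M' (app W phi) = app W (app M phi).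
Proof.
move=> [eig span] spec_M spec_M' intertwine phi; have [al ->] := span phi.
have eigW k : app rho' (app W (b k)) = (fun c => lam k * app W (b k) c).
  by rewrite intertwine eig app_scale.
rewrite !app_sum; apply: functional_extensionality => c; apply: eq_bigr => k _.
by rewrite (spec_M' _ _ (eigW k)) (spec_M _ _ (eig k)) app_scale.
Qed.

Definition outer (phi : vec) : op := fun c c' => phi c * (phi c')^*.
Definition superop (K : conf -> conf -> conf -> conf -> C) (M : op) : op :=
  fun c c' => \sum_e \sum_e' K c c' e e' * M e e'.

Lemma comp_compE (A M B : op) c c' :
  comp (comp A M) B c c' = \sum_f \sum_g A c f * M f g * B g c'.
Proof. by rewrite /comp; under eq_bigr do rewrite mulr_suml; exact: exchange_big. Qed.

Lemma outer_app (A : op) (phi : vec) :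
  outer (app A phi) = comp (comp A (outer phi)) (adjoint A).
Proof.
apply: functional_extensionality => c; apply: functional_extensionality => c'.
rewrite comp_compE /outer /app rmorph_sum mulr_suml; apply: eq_bigr => f _.
rewrite mulr_sumr; apply: eq_bigr => g _.
by rewrite rmorphM /= /adjoint mulrACA mulrAC.
Qed.

Lemma superop_conj (K : conf -> conf -> conf -> conf -> C) (A B : op) :
  (forall c c' f g, \sum_e \sum_e' K c c' e e' * (A e f * B g e') =
                    \sum_a \sum_b K a b f g * (A c a * B b c')) ->
  forall M, superop K (comp (comp A M) B) = comp (comp A (superop K M)) B.
Proof.
move=> K_conj M; apply: functional_extensionality => c.
apply: functional_extensionality => c'; rewrite comp_compE /superop.
transitivity (\sum_e \sum_e' \sum_f \sum_g K c c' e e' * (A e f * B g e') * M f g).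
  apply: eq_bigr => e _; apply: eq_bigr => e' _; rewrite comp_compE mulr_sumr.
  apply: eq_bigr => f _; rewrite mulr_sumr; apply: eq_bigr => g _.
  by rewrite [A e f * _ * _]mulrAC !mulrA.
rewrite exchange_sum2.
transitivity (\sum_f \sum_g \sum_a \sum_b K a b f g * (A c a * B b c') * M f g).
  apply: eq_bigr => f _; apply: eq_bigr => g _.
  under eq_bigr do rewrite -mulr_suml.
  rewrite -mulr_suml K_conj mulr_suml; apply: eq_bigr => a _.
  by rewrite mulr_suml.
rewrite -exchange_sum2; apply: eq_bigr => a _; apply: eq_bigr => b _.
rewrite mulr_sumr mulr_suml; apply: eq_bigr => f _.
rewrite mulr_sumr mulr_suml; apply: eq_bigr => g _.
by ring.
Qed.

Definition site_kernel (inX : bool) n (a a' x x' : 'I_n) : bool :=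
  if inX then (x == a) && (x' == a') else (a == a') && (x == x').

(* [rdm X phi = superop (rdm_kernel X) (outer phi)]: the kernel of
   |phi><phi| |-> rho_X (x) 1 factorises over sites, acting as the identity on
   the sites of X and as M |-> tr M * 1 on the others. *)
Definition rdm_kernel (X : {set V}) (c c' e e' : conf) : C :=
  \prod_v (site_kernel (v \in X) (c v) (c' v) (e v) (e' v))%:R.

Lemma site_kernel_forall (X : {set V}) (c c' e e' : conf) :
  [forall v, site_kernel (v \in X) (c v) (c' v) (e v) (e' v)] =
  [forall v, (v \notin X) ==> (c v == c' v)] &&
  [forall v, (v \in X) ==> (e v == c v)] && (e' == glue X c' e).
Proof.
apply/forallP/idP => [H|].
  rewrite -andbA; apply/and3P; split.
  - apply/forallP => v; apply/implyP => vX.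
    by move: (H v); rewrite /site_kernel (negbTE vX) => /andP[].
  - apply/forallP => v; apply/implyP => vX.
    by move: (H v); rewrite /site_kernel vX => /andP[].
  - apply/eqP/ffunP => v; rewrite ffunE; move: (H v); rewrite /site_kernel.
    by case: (v \in X) => /andP[_ /eqP].
case/andP => /andP[/forallP offX /forallP onX] /eqP-> v.
rewrite /site_kernel ffunE; have [vX|vX] := boolP (v \in X); rewrite eqxx andbT.
  exact: (implyP (onX v)).
exact: (implyP (offX v)).
Qed.

Lemma rdm_kernelE (X : {set V}) (c c' e e' : conf) :
  rdm_kernel X c c' e e' =
  ([forall v, (v \notin X) ==> (c v == c' v)] &&
   [forall v, (v \in X) ==> (e v == c v)] && (e' == glue X c' e))%:R.
Proof. by rewrite /rdm_kernel prod_nat_forall site_kernel_forall. Qed.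

Lemma rdm_superop X (phi : vec) : rdm X phi = superop (rdm_kernel X) (outer phi).
Proof.
apply: functional_extensionality => c; apply: functional_extensionality => c'.
rewrite /rdm /superop.
under [RHS]eq_bigr => e _ do under eq_bigr => e' _ do rewrite rdm_kernelE.
case: [forall v, _] => /=; last first.
  by symmetry; apply: big1 => e _; apply: big1 => e' _; rewrite mul0r.
rewrite big_mkcond; apply: eq_bigr => e _; case: [forall v, _] => /=.
  by rewrite sum_delta.
by symmetry; apply: big1 => e' _; rewrite mul0r.
Qed.

Lemma rdm_kernel_swap X c c' e e' : rdm_kernel X c' c e' e = rdm_kernel X c c' e e'.
Proof.
apply: eq_bigr => v _; rewrite /site_kernel; case: (v \in X); first by rewrite andbC.
by rewrite eq_sym [e' v == _]eq_sym.
Qed.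

Lemma conjc_rdm_kernel X c c' e e' : (rdm_kernel X c c' e e')^* = rdm_kernel X c c' e e'.
Proof. by rewrite rdm_kernelE rmorph_nat. Qed.

Lemma rdm_hermitian X (phi : vec) : hermitian_op (rdm X phi).
Proof.
move=> c c'; rewrite !rdm_superop /superop rmorph_sum exchange_big.
apply: eq_bigr => e _; rewrite rmorph_sum; apply: eq_bigr => e' _.
rewrite rmorphM /= conjc_rdm_kernel rdm_kernel_swap /outer rmorphM /= conjcK.
by rewrite [_ * phi e']mulrC.
Qed.

Lemma unitary_colsE n (M : 'M[C]_n) : unitary M ->
  forall a b, \sum_k (M k a)^* * M k b = (a == b)%:R.
Proof.
move=> [_ adjMM] a b; have := congr1 (fun A : 'M_n => A a b) adjMM.
by rewrite !mxE => <-; apply: eq_bigr => k _; rewrite mxE.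
Qed.

Lemma unitary_rowsE n (M : 'M[C]_n) : unitary M ->
  forall a b, \sum_k M a k * (M b k)^* = (a == b)%:R.
Proof.
move=> [MadjM _] a b; have := congr1 (fun A : 'M_n => A a b) MadjM.
by rewrite !mxE => <-; apply: eq_bigr => k _; rewrite mxE.
Qed.

Lemma site_kernel_unitary n (M : 'M[C]_n) inX a a' x x' : unitary M ->
  \sum_k \sum_k' (site_kernel inX a a' k k')%:R * (M k x * (M k' x')^*) =
  \sum_k \sum_k' (site_kernel inX k k' x x')%:R * (M a k * (M a' k')^*).
Proof.
move=> unitaryM; rewrite /site_kernel; case: inX.
  by under [RHS]eq_bigr do under eq_bigr do rewrite [x == _]eq_sym [x' == _]eq_sym;
    rewrite !sum2_delta.
under [RHS]eq_bigr do under eq_bigr do rewrite andbC.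
rewrite !sum2_diag (unitary_rowsE unitaryM).
under eq_bigr do rewrite mulrC.
by rewrite (unitary_colsE unitaryM) mulrC eq_sym.
Qed.

Section Onsite.
Variable U : forall v : V, 'M[C]_(d v).
Hypothesis unitaryU : forall v, unitary (U v).
Notation W := (onsite U).

Lemma onsite_colsE a b : \sum_e (W e a)^* * W e b = (a == b)%:R.
Proof.
transitivity (\sum_(e : conf) \prod_v ((U v (e v) (a v))^* * U v (e v) (b v))).
  by apply: eq_bigr => e _; rewrite /onsite rmorph_prod -big_split.
rewrite (sum_dffun_prod (fun v k => (U v k (a v))^* * U v k (b v))).
under eq_bigr do rewrite unitary_colsE //.
rewrite prod_nat_forall; congr (nat_of_bool _)%:R.
by apply/eqfunP/eqP => [/ffunP|->].
Qed.

Lemma adjoint_onsiteK (v : vec) : app (adjoint W) (app W v) = v.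
Proof.
rewrite -app_comp; apply: functional_extensionality => c; rewrite /app /comp /adjoint.
by under eq_bigr do rewrite onsite_colsE eq_sym; rewrite sum_delta.
Qed.

Lemma rdm_kernel_onsite X c c' f g :
  \sum_e \sum_e' rdm_kernel X c c' e e' * (W e f * adjoint W g e') =
  \sum_a \sum_b rdm_kernel X a b f g * (W c a * adjoint W b c').
Proof.
rewrite /adjoint /rdm_kernel /onsite.
transitivity (\prod_v \sum_k \sum_k'
  (site_kernel (v \in X) (c v) (c' v) k k')%:R * (U v k (f v) * (U v k' (g v))^*)).
  rewrite -sum2_dffun_prod; apply: eq_bigr => e _; apply: eq_bigr => e' _.
  by rewrite rmorph_prod -!big_split.
under eq_bigr do rewrite site_kernel_unitary //.
rewrite -sum2_dffun_prod; apply: eq_bigr => a _; apply: eq_bigr => b _.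
by rewrite rmorph_prod -!big_split.
Qed.

Lemma rdm_onsite X (phi : vec) :
  rdm X (app W phi) = comp (comp W (rdm X phi)) (adjoint W).
Proof. by rewrite !rdm_superop outer_app superop_conj //; exact: rdm_kernel_onsite. Qed.

Lemma imf_onsite X t (phi : vec) : imf X t (app W phi) = app W (imf X t phi).
Proof.
have herm := rdm_hermitian X phi; have [lam [b eig]] := hermitian_eigen_spanning herm.
apply: (spec_pow_it_intertwine eig (spec_pow_itP t herm)).
  exact: spec_pow_itP (rdm_hermitian X (app W phi)).
by move=> v; rewrite rdm_onsite !app_comp adjoint_onsiteK.
Qed.

Lemma flows_onsite s (phi : vec) : app W (flows s phi) = flows s (app W phi).
Proof.
by elim: s phi => [|[X t] s IH] phi //=; rewrite /flows /= -!/(flows s _) IH imf_onsite.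
Qed.

End Onsite.

Lemma flows_cat s1 s2 (phi : vec) : flows (s1 ++ s2) phi = flows s2 (flows s1 phi).
Proof. exact: foldl_cat. Qed.

End Operators.

Theorem lemma5 (R : realType) (V : finType) (d : V -> nat)
  (psi : vec R d) (Hpsi : normalized psi)
  (U : forall v : V, 'M[R[i]]_(d v)) (HU : forall v, unitary (U v))
  (s : seq ({set V} * R)) (i : nat) (Hi : (i <= size s)%N) :
  app (onsite U) (flows s psi) =
  flows (drop i s) (app (onsite U) (flows (take i s) psi)).
Proof.
by rewrite !flows_onsite // -flows_cat cat_take_drop.
Qed.
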